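(* There is an absolute constant $C>0$ such that the following holds. Let $G$ be a finite group, let $\Gamma\subset\operatorname{Lin}(G)$ be symmetric ($\Gamma=-\Gamma$) and contain the identity $0_{\operatorname{Lin}(G)}$, and suppose $X\subset \operatorname{Lin}(G)$ is a finite set with $\Gamma+\Gamma\subset\operatorname{Span}(X)+\Gamma$. Let $\delta\in(0,2^{-4}]$. Then $$\mathbb{P}_G(\operatorname{LinBohr}(\Gamma\cup X,2\delta))\le \exp(C|X|\log(2|X|))\,\mathbb{P}_G(\operatorname{LinBohr}(\Gamma\cup X,\delta)),$$ where $|X|\log(2|X|)$ is read as $0$ when $X=\emptyset$.
   Context: $\operatorname{Lin}(G)$ is the set of homomorphisms $G\to S^1$, an abelian group written additively: $(\gamma+\gamma')(x)=\gamma(x)\gamma'(x)$, $0_{\operatorname{Lin}(G)}$ is the trivial homomorphism, $-\gamma=\overline{\gamma}$. Sumsets $\Gamma+\Gamma'=\{\gamma+\gamma'\}$. $\operatorname{Span}(X):=\{\sum_{x\in X}\sigma_x x:\sigma\in\{-1,0,1\}^X\}$. For $z\in S^1$, $\|z\|:=(2\pi)^{-1}|\operatorname{Arg} z|$ with $\operatorname{Arg} z\in(-\pi,\pi]$. For $\Lambda\subset\operatorname{Lin}(G)$ and $\delta>0$, $\operatorname{LinBohr}(\Lambda,\delta):=\{x\in G:\|\gamma(x)\|\le\delta\text{ for all }\gamma\in\Lambda\}$. $\mathbb{P}_G(E)=|E|/|G|$. *)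

From HB Require Import structures.
From mathcomp Require Import all_boot all_order all_algebra all_fingroup.
From mathcomp Require Import all_classical all_reals.
From mathcomp Require Import sequences exp trigo.
From mathcomp Require Import complex.
Set Implicit Arguments. Unset Strict Implicit. Unset Printing Implicit Defensive.
Import Order.TTheory GRing.Theory Num.Theory.
Local Open Scope ring_scope.

Section LinDefs.
Variable R : realType.
Variable gT : finGroupType.

Definition cfun := {ffun gT -> R[i]}.

Definition cabs (z : R[i]) : R := Num.sqrt (complex.Re z ^+ 2 + complex.Im z ^+ 2).

Definition isLin (g : cfun) : Prop :=
  (forall x y : gT, g (x * y)%g = g x * g y) /\ (forall x : gT, cabs (g x) = 1).

(* group law of Lin(G), written additively *)
Definition lin0 : cfun := [ffun => 1].
Definition linadd (g h : cfun) : cfun := [ffun x => g x * h x].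
Definition linopp (g : cfun) : cfun := [ffun x => (g x)^-1].
Definition linmulz (g : cfun) (k : int) : cfun := [ffun x => g x ^ k].

(* Span(X) for a finite set X given as a duplicate-free list *)
Definition Span (X : seq cfun) (g : cfun) : Prop :=
  exists s : seq int,
    size s = size X /\ all (fun k => k \in [:: -1; 0; 1]%R) s /\
    g = \big[linadd/lin0]_(i < size X) linmulz (nth lin0 X i) (nth 0 s i).

(* Arg z in (-pi, pi] for z <> 0 *)
Definition Arg (z : R[i]) : R :=
  if 0 <= complex.Im z then acos (complex.Re z / cabs z) else - acos (complex.Re z / cabs z).

Definition circnorm (z : R[i]) : R := `|Arg z| / (2 * pi).

Definition LinBohr (Lam : cfun -> Prop) (delta : R) : {set gT} :=
  [set x | `[< forall g, Lam g -> circnorm (g x) <= delta >] ].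

Definition probG (E : {set gT}) : R := #|E|%:R / #|[set: gT]|%:R.

End LinDefs.

From HB Require Import structures.
From mathcomp Require Import all_boot all_order all_algebra all_fingroup.
From mathcomp Require Import all_classical all_reals Rstruct.
From mathcomp Require Import sequences exp trigo complex.
From mathcomp Require Import ring lra zify.
Import Order.TTheory GRing.Theory Num.Theory.
Local Open Scope ring_scope.
Set Implicit Arguments. Unset Strict Implicit.

(* If [x, y] lie in LinBohr(Gam u X, 2 delta) and, for every [xi] in [X], the
   arguments of [xi x] and [xi y] fall into the same interval of length
   [2 pi delta / |X|], then [z = x^-1 y] satisfies [||xi z|| <= delta / |X|]
   on [X] and [||g z|| <= 4 delta] on [Gam].  Writing [g + g = s + t] with
   [s] in Span(X) and [t] in [Gam] gives [2 ||g z|| <= delta + ||t z||], since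
   doubling small arguments is exact; iterating, [||g z|| <= delta].  So
   LinBohr(Gam u X, 2 delta) is covered by [(4 |X| + 1) ^ |X|] translates of
   LinBohr(Gam u X, delta). *)

Section CircleNorm.
Variable R : realType.
Implicit Types u v : R[i].

Definition unitc u := complex.Re u ^+ 2 + complex.Im u ^+ 2 = 1.

Lemma cabs1_unitc u : cabs u = 1 -> unitc u.
Proof.
rewrite /cabs /unitc => h.
have h0 : 0 <= complex.Re u ^+ 2 + complex.Im u ^+ 2 by rewrite addr_ge0 // sqr_ge0.
by rewrite -(sqr_sqrtr h0) h expr1n.
Qed.

Lemma unitc_cabs1 u : unitc u -> cabs u = 1.
Proof. by rewrite /cabs /unitc => ->; rewrite sqrtr1. Qed.

Lemma unitc1 : unitc 1.
Proof. by rewrite /unitc /= expr1n expr0n addr0. Qed.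

Lemma unitc_Re u : unitc u -> -1 <= complex.Re u <= 1.
Proof.
move=> h; rewrite -ler_norml -(@ler_pXn2r _ 2) // ?inE ?normr_ge0 //.
rewrite real_normK ?num_real // expr1n -h lerDl sqr_ge0 //.
by rewrite nnegrE ler01.
Qed.

Lemma unitcM u v : unitc u -> unitc v -> unitc (u * v).
Proof.
case: u => a b; case: v => c d; rewrite /unitc /= => h1 h2.
rewrite -[1]mulr1 -{1}h1 -h2; ring.
Qed.

Lemma ReV u : unitc u -> complex.Re u^-1 = complex.Re u.
Proof. by case: u => a b; rewrite /unitc /= => ->; rewrite divr1. Qed.

Lemma ImV u : unitc u -> complex.Im u^-1 = - complex.Im u.
Proof. by case: u => a b; rewrite /unitc /= => ->; rewrite divr1. Qed.

Lemma unitcV u : unitc u -> unitc u^-1.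
Proof. by move=> h; rewrite /unitc ReV // ImV // sqrrN. Qed.

Lemma ReM u v :
  complex.Re (u * v) = complex.Re u * complex.Re v - complex.Im u * complex.Im v.
Proof. by case: u => a b; case: v => c d. Qed.

Lemma ImM u v :
  complex.Im (u * v) = complex.Re u * complex.Im v + complex.Im u * complex.Re v.
Proof. by case: u => a b; case: v => c d. Qed.

Lemma normr_Arg u : unitc u -> `|Arg u| = acos (complex.Re u).
Proof.
move=> h; rewrite /Arg unitc_cabs1 // divr1.
have h1 := acos_ge0 (unitc_Re h).
by case: ifP => _; rewrite ?normrN ger0_norm.
Qed.

Lemma cos_sin_Arg u : unitc u -> cos (Arg u) = complex.Re u /\ sin (Arg u) = complex.Im u.
Proof.
move=> h; have hr := unitc_Re h.
have hc : cos (acos (complex.Re u)) = complex.Re u by apply: acosK; rewrite in_itv.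
have hs : sin (acos (complex.Re u)) = `|complex.Im u|.
  by rewrite sin_acos // -h addrAC subrr add0r sqrtr_sqr.
rewrite /Arg unitc_cabs1 // divr1; case: ifP => hi; first by rewrite hc hs ger0_norm.
by rewrite cosN sinN hc hs ltr0_norm ?opprK // ltNge hi.
Qed.

Lemma acos_cos_le_normr (t : R) : acos (cos t) <= `|t|.
Proof.
have := @acos_lepi R (cos t); rewrite cos_geN1 cos_le1 => /(_ isT) h.
have [hp|hp] := leP `|t| pi; last exact: le_trans h (ltW hp).
by rewrite -cos_norm cosK // in_itv /= normr_ge0 hp.
Qed.

Lemma circnorm_ge0 u : 0 <= circnorm u.
Proof. by rewrite /circnorm divr_ge0 // mulr_ge0 // pi_ge0. Qed.

Lemma circnorm1 : circnorm (1 : R[i]) = 0.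
Proof. by rewrite /circnorm (normr_Arg (@unitc1)) /= acos1 mul0r. Qed.

Lemma circnormV u : unitc u -> circnorm u^-1 = circnorm u.
Proof. by move=> h; rewrite /circnorm (normr_Arg (unitcV h)) (normr_Arg h) ReV. Qed.

Lemma circnormM_angle u v (a b : R) : unitc u -> unitc v ->
  complex.Re u = cos a -> complex.Im u = sin a ->
  complex.Re v = cos b -> complex.Im v = sin b ->
  circnorm (u * v) <= `|a + b| / (2 * pi).
Proof.
move=> hu hv h1 h2 h3 h4.
rewrite /circnorm (normr_Arg (unitcM _ _)) // ReM h1 h2 h3 h4 -cosD.
by rewrite ler_pM2r ?invr_gt0 ?mulr_gt0 ?pi_gt0 // acos_cos_le_normr.
Qed.

Lemma circnormM u v : unitc u -> unitc v -> circnorm (u * v) <= circnorm u + circnorm v.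
Proof.
move=> hu hv; have [a1 a2] := cos_sin_Arg hu; have [b1 b2] := cos_sin_Arg hv.
apply: le_trans (circnormM_angle hu hv (esym a1) (esym a2) (esym b1) (esym b2)) _.
by rewrite /circnorm -mulrDl ler_pM2r ?invr_gt0 ?mulr_gt0 ?pi_gt0 // ler_normD.
Qed.

Lemma circnormVM u v : unitc u -> unitc v ->
  circnorm (u^-1 * v) <= `|Arg v - Arg u| / (2 * pi).
Proof.
move=> hu hv; have [a1 a2] := cos_sin_Arg hu; have [b1 b2] := cos_sin_Arg hv.
rewrite addrC; apply: circnormM_angle => //; first exact: unitcV.
- by rewrite ReV // cosN a1.
- by rewrite ImV // sinN a2.
Qed.

(* Doubling is exact as long as the doubled angle stays within (-pi, pi]. *)
Lemma circnorm_sqr u : unitc u -> circnorm u <= 1 / 4 -> circnorm (u * u) = 2 * circnorm u.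
Proof.
move=> hu hn; have [a1 a2] := cos_sin_Arg hu; have hpi := pi_gt0 R.
rewrite /circnorm (normr_Arg (unitcM _ _)) // ReM -a1 -a2 -cosD -mulr2n -cos_norm normrMn.
move: hn; rewrite /circnorm ler_pdivrMr ?mulr_gt0 // => hn.
rewrite cosK; first by rewrite mulr2n; ring.
by rewrite in_itv /= mulrn_wge0 //= mulr2n; lra.
Qed.

End CircleNorm.

Section Characters.
Variable R : realType.
Variable gT : finGroupType.
Implicit Types g h : cfun R gT.

Lemma lin_unitc g x : isLin g -> unitc (g x).
Proof. by case=> _ h; apply: cabs1_unitc. Qed.

Lemma lin_neq0 g x : isLin g -> g x != 0.
Proof.
move=> hg; apply/eqP => h0; have := lin_unitc x hg; rewrite /unitc h0 /=.
by rewrite expr0n addr0 => /eqP; rewrite eq_sym oner_eq0.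
Qed.

Lemma lin1 g : isLin g -> g 1%g = 1.
Proof.
move=> hg; have := hg.1 1%g 1%g; rewrite mulg1 => h.
by apply: (mulfI (lin_neq0 1%g hg)); rewrite mulr1 -h.
Qed.

Lemma linV g x : isLin g -> g x^-1%g = (g x)^-1.
Proof.
move=> hg; have := hg.1 x^-1%g x; rewrite mulVg lin1 // => h.
by apply: (mulIf (lin_neq0 x hg)); rewrite mulVf ?lin_neq0.
Qed.

Lemma linVM g x y : isLin g -> g (x^-1 * y)%g = (g x)^-1 * g y.
Proof. by move=> hg; rewrite hg.1 linV. Qed.

Lemma circnorm_linVM g x y : isLin g ->
  circnorm (g (x^-1 * y)%g) <= circnorm (g x) + circnorm (g y).
Proof.
move=> hg; have ux := lin_unitc x hg; have uy := lin_unitc y hg.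
rewrite linVM // -(circnormV ux); exact/circnormM/uy/unitcV.
Qed.

Lemma circnorm_Span (X : seq (cfun R gT)) s z (eta : R) :
  (forall g, g \in X -> isLin g) ->
  (forall g, g \in X -> circnorm (g z) <= eta) ->
  Span X s -> unitc (s z) /\ circnorm (s z) <= eta *+ size X.
Proof.
move=> hX hb [k [hk [hall ->]]].
have -> : eta *+ size X = \sum_(i < size X) eta by rewrite sumr_const card_ord.
apply: (big_ind2 (fun g r => unitc (g z) /\ circnorm (g z) <= r)).
- by rewrite ffunE circnorm1; split; [exact: unitc1 |].
- move=> g1 r1 g2 r2 [u1 b1] [u2 b2]; rewrite ffunE; split; first exact: unitcM.
  exact: le_trans (circnormM u1 u2) (lerD b1 b2).
- move=> i _; have hin : nth (lin0 R gT) X i \in X by rewrite mem_nth.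
  have hu := lin_unitc z (hX _ hin); have hbi := hb _ hin.
  have : nth 0 k i \in [:: -1; 0; 1] by apply: (all_nthP 0 hall); rewrite hk.
  rewrite ffunE !inE => /or3P[] /eqP ->.
  + by rewrite exprN1 circnormV //; split; [exact: unitcV |].
  + by rewrite expr0z circnorm1; split; [exact: unitc1 | exact: le_trans (circnorm_ge0 _) hbi].
  + by rewrite expr1z.
Qed.

End Characters.

Lemma le_add_geometric (R : realType) (x d e : R) :
  (forall k : nat, x <= d + e / 2 ^+ k) -> x <= d.
Proof.
move=> hx; apply/ler_addgt0Pr => eps heps.
pose k := Num.truncn (e / eps).
have hk : e / eps < k.+1%:R by apply: truncnS_gt.
have hk2 : (k.+1%:R : R) <= 2 ^+ k by rewrite -natrX ler_nat ltn_expl.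
have hp : 0 < (2 : R) ^+ k by rewrite exprn_gt0.
apply: le_trans (hx k) _; rewrite lerD2l ler_pdivrMr // -ler_pdivrMl // mulrC.
exact: le_trans (ltW hk) hk2.
Qed.

Section Contraction.
Variable R : realType.
Variable gT : finGroupType.
Variables (Gam : cfun R gT -> Prop) (X : seq (cfun R gT)) (z : gT) (delta eta : R).
Hypothesis Gam_lin : forall g, Gam g -> isLin g.
Hypothesis X_lin : forall g, g \in X -> isLin g.
Hypothesis Gam_doubling : forall g h, Gam g -> Gam h ->
  exists s t, Span X s /\ Gam t /\ linadd g h = linadd s t.
Hypothesis delta_le : delta <= 1 / 16.
Hypothesis eta_size : eta *+ size X <= delta.
Hypothesis X_small : forall g, g \in X -> circnorm (g z) <= eta.
Hypothesis Gam_small : forall g, Gam g -> circnorm (g z) <= 4 * delta.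

(* From [g + g = s + t]: [2 |g z| = |g z ^+ 2| <= |s z| + |t z|]. *)
Lemma Gam_contract_step b : (forall g, Gam g -> circnorm (g z) <= b) ->
  forall g, Gam g -> circnorm (g z) <= (delta + b) / 2.
Proof.
move=> hb g hg; have [s [t [hs [ht hgg]]]] := Gam_doubling hg hg.
have e : g z * g z = s z * t z.
  by have := congr1 (fun f : cfun R gT => f z) hgg; rewrite !ffunE.
have [us bs] := circnorm_Span X_lin X_small hs.
have ug := lin_unitc z (Gam_lin hg).
have small : 4 * delta <= 1 / 4 by move: delta_le; lra.
have hsq := circnorm_sqr ug (le_trans (Gam_small hg) small).
have := circnormM us (lin_unitc z (Gam_lin ht)); rewrite -e hsq.
have := hb t ht; move: eta_size bs; lra.
Qed.

Lemma Gam_contract g : Gam g -> circnorm (g z) <= delta.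
Proof.
have geo k : forall g, Gam g -> circnorm (g z) <= delta + 3 * delta / 2 ^+ k.
  elim: k => [|k IH] h hh; first by rewrite expr0 divr1; have := Gam_small hh; lra.
  apply: le_trans (Gam_contract_step IH hh) _.
  by rewrite exprSr invfM mulrA; lra.
by move=> hg; apply: le_add_geometric => k; exact: geo.
Qed.

End Contraction.

Lemma floor_normr_le (R : realType) (a : R) (N : nat) :
  `|a| <= N%:R -> - (N%:Z) <= Num.floor a <= N%:Z.
Proof.
rewrite ler_norml => /andP[lo hi]; apply/andP; split.
  by rewrite floor_ge_int rmorphN.
by rewrite -(intrKfloor (R:=R) N%:Z); apply: le_floor.
Qed.

Lemma inord_shiftK (N : nat) (k : int) : - (N%:Z) <= k <= N%:Z ->
  (nat_of_ord (inord (absz (k + N%:Z)) : 'I_(N.*2).+1))%:Z = k + N%:Z.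
Proof.
move=> /andP[lo hi]; rewrite inordK; first by rewrite gez0_abs //; lia.
rewrite ltnS -addnn; lia.
Qed.

Lemma floor_eq_distance (R : realType) (a b c : R) : 0 < c ->
  Num.floor (a / c) = Num.floor (b / c) -> `|b - a| <= c.
Proof.
move=> hc hab.
have /andP[a1 a2] := floor_itv (a / c); have /andP[b1 b2] := floor_itv (b / c).
rewrite hab rmorphD rmorph1 /= in a1 a2; rewrite rmorphD rmorph1 /= in b2.
have e : b - a = (b / c - a / c) * c by rewrite mulrBl !divfK // lt0r_neq0.
rewrite e normrM (gtr0_norm hc) ler_piMl ?(ltW hc) // ler_norml.
by apply/andP; split; lra.
Qed.

Lemma card_le_cells (gT : finGroupType) (K : finType) (A B : {set gT}) (key : gT -> K) :
  {in A &, forall x y, key x = key y -> (x^-1 * y)%g \in B} ->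
  (#|A| <= #|K| * #|B|)%N.
Proof.
move=> hAB; pose rep k := odflt 1%g [pick y in A | key y == k].
have repP x : x \in A -> rep (key x) \in A /\ key (rep (key x)) = key x.
  move=> hx; rewrite /rep; case: pickP => [y /andP[hy /eqP hk]|h] //=.
  by have := h x; rewrite hx eqxx.
pose F x := (key x, ((rep (key x))^-1 * x)%g).
have F_inj : {in A &, injective F}.
  by move=> x y _ _ [hk]; rewrite hk => /mulgI.
have F_sub : F @: A \subset finset.setX [set: K] B.
  apply/fintype.subsetP => _ /imsetP[x hx ->]; rewrite finset.in_setX finset.in_setT.
  by have [h1 h2] := repP x hx; apply: hAB.
rewrite -(card_in_imset F_inj); apply: leq_trans (subset_leq_card F_sub) _.
by rewrite cardsX cardsT.
Qed.

Lemma cell_count_le_expR (R : realType) (n : nat) :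
  ((((2 * maxn n 1).*2.+1 ^ n)%N)%:R : R) <=
  expR (if n == 0%N then 0 else 3 * n%:R * ln (2 * n%:R)).
Proof.
case: n => [|n]; first by rewrite /= expR0 expn0.
have h2 : (0 : R) < 2 * n.+1%:R by rewrite mulr_gt0 // ltr0n.
rewrite /= (mulrC 3) -mulrA expRM_natl -[3 : R]/(3%:R) expRM_natl lnK ?posrE //.
rewrite -(natrM R 2) -!natrX ler_nat -expnM mulnC expnM leq_exp2r //.
rewrite (maxn_idPl (ltn0Sn n)) -addnn; nia.
Qed.

Section BohrDoubling.
Variable R : realType.
Variable gT : finGroupType.
Variables (Gam : cfun R gT -> Prop) (X : seq (cfun R gT)) (delta : R).
Hypothesis Gam_lin : forall g, Gam g -> isLin g.
Hypothesis X_lin : forall g, g \in X -> isLin g.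
Hypothesis Gam_doubling : forall g h, Gam g -> Gam h ->
  exists s t, Span X s /\ Gam t /\ linadd g h = linadd s t.
Hypothesis delta_gt0 : 0 < delta.
Hypothesis delta_le : delta <= 1 / 16.

Local Notation GX := (fun g => Gam g \/ g \in X).
Local Notation A := (LinBohr GX (2 * delta)).
Local Notation B := (LinBohr GX delta).
Local Notation n := (size X).
Local Notation m := (maxn n 1).

Let eta := delta / m%:R.
Let width := 2 * pi * eta.
Let xi (i : 'I_n) := nth (lin0 R gT) X i.

(* The arguments of the [xi i x] are cut into intervals of length [width];
   on [A] they range over [2 * m] intervals on either side of [0]. *)
Definition cell x : {ffun 'I_n -> 'I_((2 * m).*2).+1} :=
  [ffun i => inord `|Num.floor (Arg (xi i x) / width) + (2 * m)%:Z|].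

Lemma m_gt0 : (0 : R) < m%:R.
Proof. by rewrite ltr0n leq_max orbT. Qed.

Lemma width_gt0 : 0 < width.
Proof. by rewrite /width /eta !mulr_gt0 ?pi_gt0 ?invr_gt0 ?m_gt0. Qed.

Lemma Bohr_double_Arg x i : x \in A -> `|Arg (xi i x) / width| <= (2 * m)%:R.
Proof.
rewrite inE => /asboolP /(_ (xi i) (or_intror (mem_nth _ (ltn_ord i)))).
have hpi := pi_gt0 R; rewrite /circnorm ler_pdivrMr ?mulr_gt0 // => hA.
have e : (2 * m)%:R * width = 2 * delta * (2 * pi).
  by rewrite /width /eta natrM; field; rewrite lt0r_neq0 ?m_gt0.
by rewrite normrM normfV (gtr0_norm width_gt0) ler_pdivrMr ?width_gt0 // e.
Qed.

Lemma cell_floor x y i : x \in A -> y \in A -> cell x = cell y ->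
  Num.floor (Arg (xi i x) / width) = Num.floor (Arg (xi i y) / width).
Proof.
move=> hx hy /ffunP /(_ i) /(congr1 (fun k => (nat_of_ord k)%:Z)); rewrite !ffunE.
by rewrite !inord_shiftK ?floor_normr_le ?Bohr_double_Arg // => /addIr.
Qed.

Lemma circnorm_X_cell x y g : x \in A -> y \in A -> cell x = cell y ->
  g \in X -> circnorm (g (x^-1 * y)%g) <= eta.
Proof.
move=> hx hy hxy hg; pose i := Ordinal (etrans (index_mem g X) hg).
have -> : g = xi i by rewrite /xi /= nth_index.
have hl := X_lin (mem_nth (lin0 R gT) (ltn_ord i)); have hpi := pi_gt0 R.
rewrite linVM //; apply: le_trans (circnormVM (lin_unitc x hl) (lin_unitc y hl)) _.
rewrite ler_pdivrMr ?mulr_gt0 // mulrC.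
exact: floor_eq_distance width_gt0 (cell_floor i hx hy hxy).
Qed.

Lemma cell_mulVg_Bohr x y : x \in A -> y \in A -> cell x = cell y ->
  (x^-1 * y)%g \in B.
Proof.
move=> hx hy hxy; have hX := circnorm_X_cell hx hy hxy.
have eta_le : eta <= delta.
  by rewrite /eta ler_pdivrMr ?m_gt0 // ler_peMr ?(ltW delta_gt0) // ler1n leq_maxr.
have eta_size : eta *+ n <= delta.
  rewrite -mulr_natr /eta mulrAC ler_pdivrMr ?m_gt0 //.
  by rewrite ler_pM2l // ler_nat leq_maxl.
have Gam_small g : Gam g -> circnorm (g (x^-1 * y)%g) <= 4 * delta.
  move=> hg; apply: le_trans (circnorm_linVM x y (Gam_lin hg)) _.
  move: hx hy; rewrite !inE => /asboolP /(_ g (or_introl hg)) hx.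
  by move=> /asboolP /(_ g (or_introl hg)); lra.
rewrite inE; apply/asboolP => g [hg|hg].
  exact: Gam_contract Gam_lin X_lin Gam_doubling delta_le eta_size hX Gam_small _ hg.

exact: le_trans (hX g hg) eta_le.
Qed.

Lemma card_Bohr_double : (#|A| <= (2 * m).*2.+1 ^ n * #|B|)%N.
Proof.
have := card_le_cells (key := cell) (A := A) (B := B).
rewrite card_ffun !card_ord; apply=> x y.
exact: cell_mulVg_Bohr.
Qed.

Lemma probG_Bohr_double :
  probG R A <= ((((2 * m).*2.+1 ^ n)%N)%:R) * probG R B.
Proof.
have hG : (0 < #|[set: gT]|)%N by apply/card_gt0P; exists 1%g; rewrite inE.
by rewrite /probG mulrA ler_pM2r ?invr_gt0 ?ltr0n // -natrM ler_nat card_Bohr_double.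
Qed.

End BohrDoubling.

Theorem proposition5p1 :
  exists C : Rdefinitions.R, 0 < C /\
  forall (gT : finGroupType) (Gam : cfun Rdefinitions.R gT -> Prop)
         (X : seq (cfun Rdefinitions.R gT)) (delta : Rdefinitions.R),
    (forall g, Gam g -> isLin g) ->
    (forall g, Gam g -> Gam (linopp g)) ->
    Gam (lin0 Rdefinitions.R gT) ->
    uniq X ->
    (forall g, g \in X -> isLin g) ->
    (forall g h, Gam g -> Gam h ->
       exists s t, Span X s /\ Gam t /\ linadd g h = linadd s t) ->
    0 < delta -> delta <= 1 / 16 ->
    let GX := fun g => Gam g \/ g \in X in
    probG Rdefinitions.R (LinBohr GX (2 * delta)) <=
      expR (if size X == 0%N then 0
            else C * (size X)%:R * ln (2 * (size X)%:R)) *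
      probG Rdefinitions.R (LinBohr GX delta).
Proof.
exists 3; split=> // gT Gam X delta Gam_lin _ _ _ X_lin Gam_doubling delta_gt0 delta_le.
apply: le_trans (probG_Bohr_double Gam_lin X_lin Gam_doubling delta_gt0 delta_le) _.
by rewrite ler_wpM2r ?divr_ge0 // cell_count_le_expR.
Qed.
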